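(* Let $\Gamma$ be a finite simplicial graph with no SIL, and let $v,x,y$ be distinct vertices with $v\le x$ and $v\le y$. Then $x$ and $y$ commute in $\mathbb{A}_\Gamma$ (i.e. are adjacent).
   Context: $\mathbb{A}_\Gamma$ is the right-angled Artin group on $\Gamma$. $\mathrm{lk}(u)$ = neighbours of $u$, $\mathrm{st}(u)=\mathrm{lk}(u)\cup\{u\}$; $u\le v$ iff $\mathrm{lk}(u)\subseteq\mathrm{st}(v)$. A SIL is a triple $(x,y\mid z)$ of pairwise non-adjacent vertices such that the component of $\Gamma\setminus(\mathrm{lk}(x)\cap\mathrm{lk}(y))$ containing $z$ contains neither $x$ nor $y$. *)

From mathcomp Require Import all_boot.
Set Implicit Arguments. Unset Strict Implicit. Unset Printing Implicit Defensive.

Definition simple_graph (T : finType) (e : rel T) : Prop :=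
  symmetric e /\ irreflexive e.

Definition lk (T : finType) (e : rel T) (u : T) : {set T} := [set w | e u w].
Definition st (T : finType) (e : rel T) (u : T) : {set T} := u |: lk e u.

Definition vle (T : finType) (e : rel T) (u v : T) : bool :=
  lk e u \subset st e v.

Definition rel_minus (T : finType) (e : rel T) (S : {set T}) : rel T :=
  [rel a b | [&& e a b, a \notin S & b \notin S]].

Definition is_SIL (T : finType) (e : rel T) (x y z : T) : Prop :=
  let S := lk e x :&: lk e y in
  [/\ [&& x != y, x != z & y != z],
      [&& ~~ e x y, ~~ e x z & ~~ e y z],
      z \notin S,
      ~~ connect (rel_minus e S) z x &
      ~~ connect (rel_minus e S) z y].

Definition no_SIL (T : finType) (e : rel T) : Prop :=
  forall x y z : T, ~ is_SIL e x y z.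

From mathcomp Require Import all_boot.

Set Implicit Arguments. Unset Strict Implicit. Unset Printing Implicit Defensive.

(* If x and y were not adjacent, v could be adjacent to neither of them (a
   neighbour x of v would lie in st y), so every neighbour of v lies in
   lk x ∩ lk y.  Removing lk x ∩ lk y thus isolates v, and (x, y | v) is a SIL. *)

Section DominatedVertex.

Variables (T : finType) (e : rel T).
Hypothesis esym : symmetric e.

Lemma vle_edge (v x w : T) : vle e v x -> e v w -> w != x -> e x w.
Proof.
by move=> /subsetP vx evw wx; move: (vx w); rewrite !inE evw (negbTE wx); apply.
Qed.

Lemma vle_nonadj (v x y : T) : vle e v y -> x != y -> ~~ e x y -> ~~ e v x.
Proof.
by move=> vy xy nexy; apply/negP => /(vle_edge vy)/(_ xy); rewrite esym (negbTE nexy).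
Qed.

Lemma lk_sub_lkI (v x y : T) :
  vle e v x -> vle e v y -> x != y -> ~~ e x y -> lk e v \subset lk e x :&: lk e y.
Proof.
move=> vx vy xy nexy; have nevx := vle_nonadj vy xy nexy.
have nevy : ~~ e v y by apply: (vle_nonadj vx); [rewrite eq_sym | rewrite esym].
apply/subsetP => w; rewrite !inE => evw.
have wx : w != x by apply: contraNneq nevx => <-.
have wy : w != y by apply: contraNneq nevy => <-.
by rewrite (vle_edge vx evw wx) (vle_edge vy evw wy).
Qed.

Lemma rel_minus_lk_isolated (S : {set T}) (v x : T) :
  lk e v \subset S -> v != x -> ~~ connect (rel_minus e S) v x.
Proof.
move=> /subsetP lkS vx; apply/negP => /connectP [[|w p] /= pth xE].
  by rewrite xE eqxx in vx.
by move: pth => /andP [/and3P [evw _]]; rewrite lkS // inE.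
Qed.

End DominatedVertex.

Theorem lemma4p3 (T : finType) (e : rel T) :
  simple_graph e -> no_SIL e ->
  forall v x y : T, v != x -> v != y -> x != y ->
  vle e v x -> vle e v y -> e x y.
Proof.
move=> [esym _] noSIL v x y vx vy xy vlex vley; apply/idPn => nexy.
have nevx := vle_nonadj esym vley xy nexy.
have nevy : ~~ e v y.
  by apply: (vle_nonadj esym vlex); [rewrite eq_sym | rewrite esym].
have lkv := lk_sub_lkI esym vlex vley xy nexy.
apply: (noSIL x y v); split.
- by rewrite xy eq_sym vx eq_sym vy.
- by rewrite nexy esym nevx esym nevy.
- by rewrite !inE esym (negbTE nevx).
- exact: rel_minus_lk_isolated.
- exact: rel_minus_lk_isolated.
Qed.
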